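(* Let $G$ be a $3$-edge-connected graph and let $(o,f)$ be an all-positive nowhere-zero $k$-flow on $G$ for some integer $k$. Then every edge $e$ with $f(e)=1$ and every strong $2$-edge of $(o,f)$ is deletable in the orientation $(G,o)$.
   Context: An orientation is strong if for every ordered pair of distinct vertices $u,v$ there is a directed $uv$-path. An edge $e$ is deletable in an orientation $(G,o)$ if the restriction of $o$ to $E(G)\setminus\{e\}$ is a strong orientation of $G-e$. An all-positive nowhere-zero $k$-flow on $G$ is a pair $(o,f)$ of an orientation $o$ of $G$ and a map $f:E(G)\to\{1,2,\dots,k-1\}$ such that at every vertex the sum of $f$ over incoming edges equals the sum of $f$ over outgoing edges. An edge $e$ with $f(e)=2$ is a strong $2$-edge of $(o,f)$ if $G$ has no $3$-edge-cut containing $e$ in which the other two edges both have $f$-value $1$. *)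

(* Finite multigraphs (parallel edges and loops allowed). *)
From mathcomp Require Import all_boot.
Set Implicit Arguments. Unset Strict Implicit. Unset Printing Implicit Defensive.

Section Graphs.
Variables (V E : finType) (ends : E -> V * V).

Definition uadj (S : {set E}) : rel V :=
  fun u v => [exists e in S, ((ends e).1 == u) && ((ends e).2 == v)
                           || ((ends e).2 == u) && ((ends e).1 == v)].

Definition connected_on (S : {set E}) : Prop :=
  forall u v : V, connect (uadj S) u v.

Definition three_edge_connected : Prop :=
  forall F : {set E}, #|F| < 3 -> connected_on (~: F).

(* orientation o : E -> bool; o e = true means e is directed from (ends e).1
   to (ends e).2, otherwise from (ends e).2 to (ends e).1 *)
Definition tail (o : E -> bool) (e : E) : V := if o e then (ends e).1 else (ends e).2.
Definition head (o : E -> bool) (e : E) : V := if o e then (ends e).2 else (ends e).1.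

Definition darc (o : E -> bool) (S : {set E}) : rel V :=
  fun u v => [exists e in S, (tail o e == u) && (head o e == v)].

Definition strong_on (o : E -> bool) (S : {set E}) : Prop :=
  forall u v : V, u != v -> connect (darc o S) u v.

Definition deletable (o : E -> bool) (e : E) : Prop :=
  strong_on o (setT :\ e).

Definition apnz_flow (k : nat) (o : E -> bool) (f : E -> nat) : Prop :=
  (forall e, 1 <= f e <= k - 1) /\
  (forall v : V, \sum_(e | head o e == v) f e = \sum_(e | tail o e == v) f e).

Definition ecut (X : {set V}) : {set E} :=
  [set e | ((ends e).1 \in X) != ((ends e).2 \in X)].

Definition strong_2edge (f : E -> nat) (e : E) : Prop :=
  f e = 2 /\
  ~ (exists X : {set V}, [/\ #|ecut X| = 3, e \in ecut X &
        forall e', e' \in ecut X -> e' != e -> f e' = 1]).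

End Graphs.

From Pilot Require Import Defs.
From mathcomp Require Import all_boot zify.
Set Implicit Arguments. Unset Strict Implicit. Unset Printing Implicit Defensive.

(* Suppose e is not deletable: some vertex v is unreachable from
   some vertex u in (G - e, o).  Let X be the set of vertices reachable from u
   in G - e.  No arc other than e leaves X, so the cut delta(X) consists of the
   arcs entering X together with at most the arc e leaving X.  Flow
   conservation, summed over the vertices of X, says that the flow entering X
   equals the flow leaving X, i.e. at most f(e).  Since every arc carries at
   least 1, at most f(e) arcs enter X, so |delta(X)| <= f(e) + 1, while
   3-edge-connectivity forces |delta(X)| >= 3.  Hence f(e) >= 2, and if
   f(e) = 2 then delta(X) is a 3-edge-cut through e whose two other edges
   carry flow exactly 1, so e is not a strong 2-edge. *)

Lemma card_le_sum_pos (T : finType) (A : {set T}) (w : T -> nat) :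
  (forall x, x \in A -> 0 < w x) -> #|A| <= \sum_(x in A) w x.
Proof. by move=> wpos; rewrite -sum1_card; apply: leq_sum. Qed.

Lemma sum_pos_eq_card (T : finType) (A : {set T}) (w : T -> nat) :
  (forall x, x \in A -> 0 < w x) -> \sum_(x in A) w x = #|A| ->
  forall x, x \in A -> w x = 1.
Proof.
move=> wpos sumA x xA.
have split_w : \sum_(y in A) w y = #|A| + \sum_(y in A) (w y - 1).
  rewrite -sum1_card -big_split; apply: eq_bigr => y yA /=.
  by have := wpos y yA; lia.
have /eqP : \sum_(y in A) (w y - 1) = 0 by move: split_w; rewrite sumA; lia.
rewrite sum_nat_eq0 => /forallP/(_ x); rewrite xA /= => /eqP.
by have := wpos x xA; lia.
Qed.

Section Cuts.
Variables (V E : finType) (ends : E -> V * V).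

Lemma ecut_not_in_connecting (F : {set E}) (X : {set V}) (u v : V) :
  connected_on ends (~: F) -> u \in X -> v \notin X -> ~~ (ecut ends X \subset F).
Proof.
move=> conn uX vX; apply/negP => cutF.
have closedX : closed (uadj ends (~: F)) (mem X).
  move=> x y /existsP[e' /andP[]]; rewrite inE => e'F adj.
  have : e' \notin ecut ends X by apply: contra e'F => /(subsetP cutF).
  rewrite inE negbK => /eqP sameside.
  by case/orP: adj => /andP[/eqP <- /eqP <-].
by have := closed_connect closedX (conn u v); rewrite uX (negbTE vX).
Qed.

Lemma three_edge_connected_cut (X : {set V}) (u v : V) :
  three_edge_connected ends -> u \in X -> v \notin X -> 3 <= #|ecut ends X|.
Proof.
move=> conn3 uX vX; rewrite leqNgt; apply/negP => small.
by have := ecut_not_in_connecting (conn3 _ small) uX vX; rewrite subxx.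
Qed.

Section Orientation.
Variable o : E -> bool.

Local Notation tl := (Defs.tail ends o).
Local Notation hd := (Defs.head ends o).

Definition in_arcs (X : {set V}) : {set E} := [set x | (hd x \in X) && (tl x \notin X)].
Definition out_arcs (X : {set V}) : {set E} := [set x | (tl x \in X) && (hd x \notin X)].

Lemma in_ecut_arc (X : {set V}) (x : E) :
  (x \in ecut ends X) = ((tl x \in X) != (hd x \in X)).
Proof. by rewrite inE /Defs.tail /Defs.head; case: (o x); rewrite // eq_sym. Qed.

Lemma ecut_in_out (X : {set V}) : ecut ends X = in_arcs X :|: out_arcs X.
Proof.
apply/setP => x; rewrite in_ecut_arc !inE.
by case: (tl x \in X); case: (hd x \in X).
Qed.

Lemma card_ecut (X : {set V}) : #|ecut ends X| = #|in_arcs X| + #|out_arcs X|.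
Proof.
have disjoint_in_out : in_arcs X :&: out_arcs X = set0.
  by apply/setP => x; rewrite !inE; case: (tl x \in X); rewrite ?andbF.
by rewrite ecut_in_out cardsU disjoint_in_out cards0 subn0.
Qed.

(* Summing conservation over the vertices of X: the flow entering X equals the
   flow leaving X, the arcs inside X cancelling out. *)
Lemma flow_cut_balance (f : E -> nat) (X : {set V}) :
  (forall v, \sum_(x | hd x == v) f x = \sum_(x | tl x == v) f x) ->
  \sum_(x in in_arcs X) f x = \sum_(x in out_arcs X) f x.
Proof.
move=> conserv.
have into_X : \sum_(x | hd x \in X) f x = \sum_(x | tl x \in X) f x.
  rewrite (partition_big hd (mem X)) //= (partition_big tl (mem X)) //=.
  apply: eq_bigr => y yX.
  have at_y (p : E -> V) x : (p x \in X) && (p x == y) = (p x == y).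
    by case: (p x =P y) => [->|]; rewrite ?yX ?andbF.
  by rewrite (eq_bigl _ _ (at_y hd)) [RHS](eq_bigl _ _ (at_y tl)).
rewrite (bigID (fun x => tl x \in X)) [RHS](bigID (fun x => hd x \in X)) /= in into_X.
rewrite (eq_bigl (fun x => (tl x \in X) && (hd x \in X)) _ (fun x => andbC _ _)) in into_X.
move/addnI: into_X => balance.
by rewrite (eq_bigl _ _ (fun x => in_set _ x)) [RHS](eq_bigl _ _ (fun x => in_set _ x)).
Qed.

Lemma reach_out_arcs (S : {set E}) (u : V) :
  out_arcs [set y | connect (darc ends o S) u y] \subset ~: S.
Proof.
apply/subsetP => x; rewrite !inE => /andP[reach_tl]; apply: contraNN => xS.
apply: (connect_trans reach_tl); apply: connect1.
by apply/existsP; exists x; rewrite xS !eqxx.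
Qed.

Lemma single_exit_cut (k : nat) (f : E -> nat) (X : {set V}) (e : E) :
  apnz_flow ends k o f -> out_arcs X \subset [set e] -> 3 <= #|ecut ends X| ->
  2 <= f e /\
  (f e = 2 -> [/\ #|ecut ends X| = 3, e \in ecut ends X &
                  forall e', e' \in ecut ends X -> e' != e -> f e' = 1]).
Proof.
move=> [fpos conserv] outX cut3.
have pos x : x \in in_arcs X -> 0 < f x by case/andP: (fpos x).
have in_le := card_le_sum_pos pos.
rewrite (flow_cut_balance _ conserv) in in_le.
(* No arc leaves X: then no arc enters X either, so delta(X) is empty. *)
move: cut3; rewrite card_ecut; case: (eqVneq (out_arcs X) set0) => [out0|outN0].
  by move: in_le; rewrite out0 big_set0 cards0; lia.
have out1 : out_arcs X = [set e].
  by move: outX; rewrite subset1 (negbTE outN0) orbF => /eqP.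
(* Only e leaves X: at most f(e) arcs enter X, and at least two must. *)
rewrite out1 big_set1 cards1 in in_le * => cut3.
split=> [|fe2]; first lia.
have in2 : #|in_arcs X| = 2 by lia.
have in_ones := sum_pos_eq_card pos.
rewrite (flow_cut_balance _ conserv) out1 big_set1 in in_ones.
split=> [|| e']; rewrite ?card_ecut ?out1 ?cards1 ?in2 //.
  by rewrite ecut_in_out out1 in_setU set11 orbT.
rewrite ecut_in_out out1 in_setU in_set1 => /orP[e'in _|/eqP->]; last by rewrite eqxx.
by apply: in_ones; rewrite ?fe2 ?in2.
Qed.

End Orientation.
End Cuts.

Theorem lemma1 (V E : finType) (ends : E -> V * V) (k : nat)
    (o : E -> bool) (f : E -> nat) :
  three_edge_connected ends ->
  apnz_flow ends k o f ->
  forall e : E, (f e = 1 \/ strong_2edge ends f e) -> deletable ends o e.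
Proof.
move=> conn3 flow e weak_e u v uv; apply/idPn => unreach.
set X := [set y | connect (darc ends o (setT :\ e)) u y].
have uX : u \in X by rewrite inE connect0.
have vX : v \notin X by rewrite inE.
have exit_e : out_arcs ends o X \subset [set e].
  apply: (subset_trans (reach_out_arcs _ _ _ _)); apply/subsetP => x.
  by rewrite !inE andbT negbK.
have [fe_ge2 cut_of_fe2] :=
  single_exit_cut flow exit_e (three_edge_connected_cut conn3 uX vX).
case: weak_e => [fe1|[fe2 []]]; first by rewrite fe1 in fe_ge2.
by exists X; apply: cut_of_fe2.
Qed.
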